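(* With $F_n$ as defined in the context, $$\int_0^{1+\frac{(\log n)^2}{n}}F_n(w)\,dw=O(n\log\log n)\qquad(n\to\infty).$$
   Context: For $w>0$ and integer $n\ge1$ let $a_n(w)=\sum_{j=0}^n w^j$, $b_n(w)=\sum_{j=1}^n jw^j$, $c_n(w)=\sum_{j=0}^n j^2w^j$, and $$F_n(w)=\frac{1}{2\sqrt{w}}\sqrt{\frac{c_n(w)}{a_n(w)}}\sqrt{\frac{a_n(w)c_n(w)-b_n(w)^2}{w\,a_n(w)^2}}.$$ (For the harmonic Kac ensemble with $m=n$, $\int_a^bF_n(w)\,dw$ equals the expected number of zeros in $\{a<|z|^2<b\}$.) $\log$ is the natural logarithm. *)

From HB Require Import structures.
From mathcomp Require Import all_boot all_order all_algebra.
From mathcomp Require Import all_classical all_reals all_analysis.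
Set Implicit Arguments. Unset Strict Implicit. Unset Printing Implicit Defensive.
Import Order.TTheory GRing.Theory Num.Theory.
Local Open Scope ring_scope.

Definition kac_a {R : realType} (n : nat) (w : R) : R :=
  \sum_(0 <= j < n.+1) w ^+ j.
Definition kac_b {R : realType} (n : nat) (w : R) : R :=
  \sum_(1 <= j < n.+1) j%:R * w ^+ j.
Definition kac_c {R : realType} (n : nat) (w : R) : R :=
  \sum_(0 <= j < n.+1) (j ^ 2)%:R * w ^+ j.

(* F_n(w); only its values for w > 0 matter (the point w = 0 is null). *)
Definition kac_F {R : realType} (n : nat) (w : R) : R :=
  (2 * Num.sqrt w)^-1
  * Num.sqrt (kac_c n w / kac_a n w)
  * Num.sqrt ((kac_a n w * kac_c n w - kac_b n w ^+ 2) / (w * kac_a n w ^+ 2)).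

From HB Require Import structures.
From mathcomp Require Import all_boot all_order all_algebra.
From mathcomp Require Import all_classical all_reals all_analysis.
From mathcomp Require Import ring lra measurable_realfun.
Import Order.TTheory GRing.Theory Num.Theory numFieldNormedType.Exports.
Local Open Scope classical_set_scope.
Local Open Scope ring_scope.

(* Put [q := c_n / (w a_n)], so that [F_n <= q / 2] for [w > 0].  On [(0, 1]]
   the closed forms of the sums give [(1 - w)^2 q <= 2] and [w q <= n^2], hence
   [F_n(w) <= 4 n^2 / (1 + n (1 - w))^2], whose integral over [(0, 1]] is at
   most [4 n].  For [w >= 1] the same estimate for the reflected sum
   [\sum_j (n - j)^2 w^j] bounds the variance [(a_n c_n - b_n^2) / a_n^2] of the
   weights [w^j] by [2 w / (w - 1)^2], hence [F_n(w) <= 2 n^2 / (1 + n (w - 1))],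
   whose integral over [(1, 1 + L^2 / n]], [L = log n], is
   [2 n log (1 + L^2) <= 2 n (1 + 2 log L)]. *)

Lemma sqr_sqrtr_le {R : rcfType} (x y : R) : 0 <= y -> x <= y ->
  Num.sqrt x ^+ 2 <= y.
Proof.
move=> y0 xy; have [x0|x0] := leP 0 x; first by rewrite sqr_sqrtr.
by rewrite ltr0_sqrtr // expr0n.
Qed.

Lemma half_le_unit_profile {R : realFieldType} (N q w : R) :
  2 <= N -> 0 < w <= 1 -> 0 <= q -> q * (1 - w) ^+ 2 <= 2 -> q * w <= N ^+ 2 ->
  q / 2 <= 4 * N ^+ 2 / (1 + N * (1 - w)) ^+ 2.
Proof.
move=> N2 /andP[w0 w1] q0 qw1 qw.
have q_le : q <= 2 * N ^+ 2.
  have [wh|wh] := leP (2^-1) w; first nra.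
  have : q * 2^-1 ^+ 2 <= 2.
    by apply: le_trans qw1; rewrite ler_wpM2l // ler_sqr ?nnegrE; lra.
  nra.
have pos : 0 < (1 + N * (1 - w)) ^+ 2.
  by rewrite exprn_gt0 // ltr_pwDl // mulr_ge0 ?subr_ge0; lra.
rewrite ler_pdivlMr //.
have sq : (1 + N * (1 - w)) ^+ 2 <= 2 + 2 * N ^+ 2 * (1 - w) ^+ 2.
  by have := sqr_ge0 (1 - N * (1 - w)); nra.
apply: le_trans (_ : q / 2 * (2 + 2 * N ^+ 2 * (1 - w) ^+ 2) <= _).
  by rewrite ler_wpM2l ?divr_ge0.
have : 0 <= N ^+ 2 := sqr_ge0 N.
nra.
Qed.

Lemma le_sqr_above1_profile {R : realFieldType} (N S w : R) :
  0 <= N -> 1 <= w -> 0 <= S <= N ^+ 2 -> S * (w - 1) ^+ 2 <= 2 ->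
  N ^+ 2 * S / 4 <= (2 * N ^+ 2 / (1 + N * (w - 1))) ^+ 2.
Proof.
move=> N0 w1 /andP[S0 SN] Sw.
have pos : 0 < 1 + N * (w - 1) by rewrite ltr_pwDl // mulr_ge0 ?subr_ge0.
rewrite expr_div_n ler_pdivlMr ?exprn_gt0 //.
have sq : (1 + N * (w - 1)) ^+ 2 <= 2 + 2 * N ^+ 2 * (w - 1) ^+ 2.
  by have := sqr_ge0 (1 - N * (w - 1)); nra.
apply: le_trans (_ : N ^+ 2 * S / 4 * (2 + 2 * N ^+ 2 * (w - 1) ^+ 2) <= _).
  by rewrite ler_wpM2l // !mulr_ge0 ?sqr_ge0.
have N2 : 0 <= N ^+ 2 := sqr_ge0 N.
have : N ^+ 2 * S <= N ^+ 2 * N ^+ 2 by rewrite ler_wpM2l.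
have : N ^+ 2 * N ^+ 2 * (S * (w - 1) ^+ 2) <= N ^+ 2 * N ^+ 2 * 2.
  by rewrite ler_wpM2l ?mulr_ge0.
rewrite !exprMn; nra.
Qed.

Section Logarithms.
Context {R : realType}.

Lemma ln2_ge_half : 2^-1 <= ln (2 : R).
Proof.
have := @le_ln1Dx R (- 2^-1) ltac:(lra).
by rewrite (_ : 1 - 2^-1 = 2^-1 :> R) ?lnV ?posrE; lra.
Qed.

Lemma ln2_le1 : ln (2 : R) <= 1.
Proof. by have := @le_ln1Dx R 1 ltac:(lra); rewrite (_ : 1 + 1 = 2). Qed.

Lemma ln_ge2 (x : R) : 16 <= x -> 2 <= ln x.
Proof.
rewrite (_ : 16 = 2 ^+ 4); last by rewrite -natrX.
move=> x16; apply: le_trans (_ : ln (2 ^+ 4) <= _).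
  by rewrite lnXn //; have := ln2_ge_half; rewrite -mulr_natr; lra.
by rewrite ler_ln ?posrE ?exprn_gt0 //; lra.
Qed.

Lemma ln_1Dsqr_le (x : R) : 1 <= x -> ln (1 + x ^+ 2) <= 1 + 2 * ln x.
Proof.
move=> x1; have x2 : 0 < x ^+ 2 by rewrite exprn_gt0 // (lt_le_trans ltr01).
apply: (@le_trans _ _ (ln (2 * x ^+ 2))).
  by rewrite ler_ln ?posrE ?mulr_gt0 ?addr_gt0 //; nra.
rewrite lnM ?posrE // lnXn ?(lt_le_trans ltr01) // mulr_natl.
by rewrite lerD2r ln2_le1.
Qed.

End Logarithms.

Section Integrals.
Context {R : realType}.
Local Notation mu := (@lebesgue_measure R).

Lemma le_integral_antiderivative (h f G : R -> R) (a b : R) : a < b ->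
  measurable_fun `]a, b] h ->
  (forall x, a < x <= b -> 0 <= h x <= f x) ->
  {within `[a, b], continuous f} ->
  (forall x, a <= x <= b -> is_derive x 1 G (f x)) ->
  (\int[mu]_(x in `]a, b]) (h x)%:E <= (G b - G a)%:E)%E.
Proof.
move=> ab mh hf cf dG.
have Gcont x : a <= x <= b -> {for x, continuous G}.
  move=> /dG dGx; apply: differentiable_continuous; apply/derivable1_diffP.
  by case: dGx.
have mf : measurable_fun `]a, b] f.
  apply: measurable_funS (subspace_continuous_measurable_fun _ cf) => //.
  by apply: subset_itvr; rewrite bnd_simp.
apply: (@le_trans _ _ (\int[mu]_(x in `]a, b]) (f x)%:E)%E).
  apply: ge0_le_integral => //.
  - by move=> x /hf /andP[h0 _]; rewrite lee_fin.
  - exact/measurable_EFinP.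
  - exact/measurable_EFinP.
  - by move=> x /hf /andP[_ h1]; rewrite lee_fin.
rewrite integral_itv_obnd_cbnd; last exact/measurable_EFinP.
rewrite (@continuous_FTC2 _ _ G _ _ ab cf) ?EFinB //.
- split.
  + by move=> x; rewrite in_itv /= => /andP[ax xb]; case: (dG x); rewrite ?ltW.
  + by apply: cvg_at_right_filter; apply: Gcont; rewrite lexx ltW.
  + by apply: cvg_at_left_filter; apply: Gcont; rewrite lexx ltW.
- move=> x; rewrite in_itv /= => /andP[ax xb].
  by rewrite derive1E; case: (dG x) => [|_ ->]; rewrite ?ltW.
Qed.

End Integrals.

Section KacSums.
Context {R : realType}.
Implicit Types w : R.

Lemma kac_aS n w : kac_a n.+1 w = kac_a n w + w ^+ n.+1.
Proof. by rewrite /kac_a big_nat_recr. Qed.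

Lemma kac_bS n w : kac_b n.+1 w = kac_b n w + n.+1%:R * w ^+ n.+1.
Proof. by rewrite /kac_b big_nat_recr. Qed.

Lemma kac_cS n w : kac_c n.+1 w = kac_c n w + (n.+1 ^ 2)%:R * w ^+ n.+1.
Proof. by rewrite /kac_c big_nat_recr. Qed.

Lemma kac_a_geometric n w : (1 - w) * kac_a n w = 1 - w ^+ n.+1.
Proof.
elim: n => [|n IH]; first by rewrite /kac_a big_nat1 expr0 expr1 mulr1.
by rewrite kac_aS mulrDr IH !exprS; ring.
Qed.

Lemma kac_b_geometric n w :
  (1 - w) * kac_b n w = kac_a n w - 1 - n%:R * w ^+ n.+1.
Proof.
elim: n => [|n IH]; first by rewrite /kac_b /kac_a big_geq // big_nat1 expr0; ring.
by rewrite kac_bS kac_aS mulrDr IH !exprS; ring.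
Qed.

Lemma kac_c_geometric n w : (1 - w) ^+ 2 * kac_c n w =
  2 * (kac_a n w - 1) - w - (2 * n%:R - 1) * w ^+ n.+1
    - (1 - w) * n%:R ^+ 2 * w ^+ n.+1.
Proof.
elim: n => [|n IH]; first by rewrite /kac_c /kac_a !big_nat1 expr0 expr1 /=; ring.
by rewrite kac_cS kac_aS mulrDr IH natrX !exprS; ring.
Qed.

Lemma kac_a_gt0 n w : 0 <= w -> 0 < kac_a n w.
Proof.
move=> w0; elim: n => [|n IH]; first by rewrite /kac_a big_nat1 expr0.
by rewrite kac_aS ltr_wpDr ?exprn_ge0.
Qed.

Lemma kac_c_ge0 n w : 0 <= w -> 0 <= kac_c n w.
Proof.
by move=> w0; apply: sumr_ge0 => j _; rewrite mulr_ge0 ?ler0n ?exprn_ge0.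
Qed.

Lemma kac_c_le n w : 0 <= w -> kac_c n w <= n%:R ^+ 2 * kac_a n w.
Proof.
move=> w0; rewrite /kac_c /kac_a mulr_sumr; apply: ler_sum_nat => j /andP[_ jn].
by rewrite ler_wpM2r ?exprn_ge0 // -natrX ler_nat leq_sqr -ltnS.
Qed.

Lemma kac_c_le_unit n w : 0 <= w <= 1 ->
  (1 - w) ^+ 2 * kac_c n w <= 2 * w * kac_a n w.
Proof.
move=> /andP[w0 w1]; rewrite kac_c_geometric.
have := kac_a_geometric n w.
have wn : w ^+ n.+1 <= w by rewrite exprS ler_piMr // exprn_ile1.
have wn0 : 0 <= w ^+ n.+1 := exprn_ge0 _ w0.
have n0 : 0 <= n%:R :> R := ler0n _ _.
have : 0 <= (1 - w) * n%:R ^+ 2 * w ^+ n.+1 by rewrite !mulr_ge0 ?subr_ge0.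
have : 0 <= n%:R * w ^+ n.+1 by exact: mulr_ge0.
nra.
Qed.

(* [n^2 a - 2 n b + c = \sum_j (n - j)^2 w^j] is [w^n c_n(1/w)], so this is
   the reflection of [kac_c_le_unit] through [w |-> 1/w]. *)
Lemma kac_reflected_c_le n w : 1 <= w ->
  (w - 1) ^+ 2 * (n%:R ^+ 2 * kac_a n w - 2 * n%:R * kac_b n w + kac_c n w)
    <= 2 * w * kac_a n w.
Proof.
move=> w1.
have := kac_a_geometric n w; have := kac_b_geometric n w.
have := kac_c_geometric n w.
set a := kac_a n w; set b := kac_b n w; set c := kac_c n w; set P := w ^+ n.+1.
move=> ec eb ea.
have -> : (w - 1) ^+ 2 * (n%:R ^+ 2 * a - 2 * n%:R * b + c) =
   2 * w * a - 2 * w - P - (2 * n%:R - 1) * w - (w - 1) * n%:R ^+ 2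
   + (n%:R ^+ 2 * (1 - w) + 2 - 2 * n%:R) * ((1 - w) * a - (1 - P))
   - 2 * n%:R * (1 - w) * ((1 - w) * b - (a - 1 - n%:R * P))
   + ((1 - w) ^+ 2 * c - (2 * (a - 1) - w - (2 * n%:R - 1) * P
       - (1 - w) * n%:R ^+ 2 * P)) by ring.
rewrite ea eb ec !subrr !mulr0 subr0 !addr0.
have P0 : 0 <= P by rewrite exprn_ge0 // (le_trans ler01).
have n0 : 0 <= n%:R :> R := ler0n _ _.
have : 0 <= (w - 1) * n%:R ^+ 2 by rewrite mulr_ge0 ?subr_ge0 ?exprn_ge0.
nra.
Qed.

End KacSums.

Section KacF.
Context {R : realType}.
Implicit Types w : R.

Definition kac_K n w : R :=
  (kac_a n w * kac_c n w - kac_b n w ^+ 2) / (w * kac_a n w ^+ 2).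

Lemma kac_F_ge0 n w : 0 <= kac_F n w.
Proof. by rewrite /kac_F !mulr_ge0 ?invr_ge0 ?sqrtr_ge0. Qed.

Lemma kac_ratio_ge0 n w : 0 <= w -> 0 <= kac_c n w / kac_a n w.
Proof. by move=> w0; rewrite divr_ge0 ?kac_c_ge0 // ltW // kac_a_gt0. Qed.

Lemma kac_F_sqr n w : 0 < w -> kac_F n w ^+ 2 =
  kac_c n w / kac_a n w * Num.sqrt (kac_K n w) ^+ 2 / (4 * w).
Proof.
move=> w0; have a0 := kac_a_gt0 n w (ltW w0).
have B0 := kac_ratio_ge0 n w (ltW w0).
rewrite /kac_F -/(kac_K n w) !exprMn exprVn exprMn.
rewrite (sqr_sqrtr B0) (sqr_sqrtr (ltW w0)).
by field; rewrite !gt_eqF.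
Qed.

Lemma kac_K_le n w : 0 < w -> kac_K n w <= kac_c n w / kac_a n w / w.
Proof.
move=> w0; have a0 := kac_a_gt0 n w (ltW w0).
have -> : kac_K n w = kac_c n w / kac_a n w / w
    - kac_b n w ^+ 2 / (w * kac_a n w ^+ 2).
  by rewrite /kac_K; field; rewrite !gt_eqF.
by rewrite lerBlDr lerDl divr_ge0 ?sqr_ge0 // mulr_ge0 ?sqr_ge0 ?ltW.
Qed.

Lemma kac_K_mul_le n w : 1 <= w -> kac_K n w * (w - 1) ^+ 2 <= 2.
Proof.
move=> w1; have w0 : 0 < w by rewrite (lt_le_trans ltr01).
have a0 := kac_a_gt0 n w (ltW w0).
set d := n%:R ^+ 2 * kac_a n w - 2 * n%:R * kac_b n w + kac_c n w.
have -> : kac_K n w = d / (kac_a n w * w)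
    - (n%:R * kac_a n w - kac_b n w) ^+ 2 / (w * kac_a n w ^+ 2).
  by rewrite /kac_K /d; field; rewrite !gt_eqF.
have hd : d / (kac_a n w * w) * (w - 1) ^+ 2 <= 2.
  rewrite mulrAC ler_pdivrMr ?mulr_gt0 // mulrC (mulrC (kac_a n w)) mulrA.
  exact: kac_reflected_c_le.
apply: le_trans hd; rewrite ler_wpM2r ?sqr_ge0 // lerBlDr lerDl.
by rewrite divr_ge0 ?sqr_ge0 // mulr_ge0 ?sqr_ge0 ?ltW.
Qed.

Lemma kac_F_le_ratio n w : 0 < w ->
  kac_F n w <= kac_c n w / kac_a n w / w / 2.
Proof.
move=> w0; have a0 := kac_a_gt0 n w (ltW w0).
have B0 := kac_ratio_ge0 n w (ltW w0).
have F0 := kac_F_ge0 n w.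
rewrite -ler_sqr ?nnegrE //; last by rewrite divr_ge0 // divr_ge0 // ltW.
rewrite kac_F_sqr //.
have -> : (kac_c n w / kac_a n w / w / 2) ^+ 2 =
    kac_c n w / kac_a n w * (kac_c n w / kac_a n w / w) / (4 * w).
  by field; rewrite !gt_eqF.
rewrite ler_pM2r ?invr_gt0 ?mulr_gt0 //.
apply: (ler_wpM2l B0); apply: sqr_sqrtr_le; last exact: kac_K_le.
by rewrite divr_ge0 // ltW.
Qed.

Lemma kac_F_le_unit n w : (2 <= n)%N -> 0 < w <= 1 ->
  kac_F n w <= 4 * n%:R ^+ 2 / (1 + n%:R * (1 - w)) ^+ 2.
Proof.
move=> n2 /andP[w0 w1]; have a0 := kac_a_gt0 n w (ltW w0).
apply: le_trans (kac_F_le_ratio n w w0) _.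
apply: half_le_unit_profile; first by rewrite ler_nat.
- by rewrite w0 w1.
- by rewrite divr_ge0 ?kac_ratio_ge0 ?ltW.
- rewrite mulrAC ler_pdivrMr // mulrAC ler_pdivrMr // mulrC.
  by apply: kac_c_le_unit; rewrite ltW.
- by rewrite divfK ?gt_eqF // ler_pdivrMr // kac_c_le ?ltW.
Qed.

Lemma kac_F_le_above1 n w : 1 <= w ->
  kac_F n w <= 2 * n%:R ^+ 2 / (1 + n%:R * (w - 1)).
Proof.
move=> w1; have w0 : 0 < w by rewrite (lt_le_trans ltr01).
have a0 := kac_a_gt0 n w (ltW w0).
have B0 := kac_ratio_ge0 n w (ltW w0).
have BN : kac_c n w / kac_a n w <= n%:R ^+ 2.
  by rewrite ler_pdivrMr // kac_c_le ?ltW.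
set S := Num.sqrt (kac_K n w) ^+ 2.
have SN : S <= n%:R ^+ 2.
  apply: sqr_sqrtr_le; first exact: sqr_ge0.
  apply: le_trans (kac_K_le n w w0) _; apply: le_trans BN.
  by rewrite ler_pdivrMr // ler_peMr.
have Sw : S * (w - 1) ^+ 2 <= 2.
  have -> : w - 1 = Num.sqrt ((w - 1) ^+ 2) by rewrite sqrtr_sqr ger0_norm ?subr_ge0.
  rewrite /S -exprMn mulrC -sqrtrM ?sqr_ge0 //.
  by apply: sqr_sqrtr_le => //; rewrite mulrC kac_K_mul_le.
have pos : 0 < 1 + n%:R * (w - 1) by rewrite ltr_pwDl // mulr_ge0 ?subr_ge0.
have F0 := kac_F_ge0 n w.
have S0 : 0 <= S by exact: sqr_ge0.
have rhs0 : 0 <= 2 * n%:R ^+ 2 / (1 + n%:R * (w - 1)).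
  exact: divr_ge0 (mulr_ge0 (ler0n _ 2) (sqr_ge0 _)) (ltW pos).
rewrite -ler_sqr ?nnegrE //.
apply: (@le_trans _ _ (n%:R ^+ 2 * S / 4)).
  rewrite kac_F_sqr // -/S (mulrC 4) invfM mulrA ler_wpM2r ?invr_ge0 //.
  rewrite ler_pdivrMr // (le_trans (ler_wpM2r S0 BN)) // ler_peMr //.
  by rewrite mulr_ge0 ?sqr_ge0.
by apply: le_sqr_above1_profile; rewrite ?ler0n ?S0 ?SN.
Qed.

End KacF.

Section Continuity.
Context {R : realType}.

Lemma continuous_monomial_sum (f : nat -> R) m k :
  continuous (fun w : R => \sum_(m <= j < k) f j * w ^+ j).
Proof.
have -> : (fun w : R => \sum_(m <= j < k) f j * w ^+ j) =
    horner (\poly_(j < k) (if (m <= j)%N then f j else 0)).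
  apply/funext => w; rewrite horner_poly big_geq_mkord big_mkcond /=.
  by apply: eq_bigr => j _; case: ifP; rewrite ?mul0r.
exact: continuous_horner.
Qed.

Lemma continuous_kac_a n : continuous (@kac_a R n).
Proof.
have -> : @kac_a R n = fun w => \sum_(0 <= j < n.+1) 1 * w ^+ j.
  by apply/funext => w; apply: eq_bigr => j _; rewrite mul1r.
exact: continuous_monomial_sum.
Qed.

Lemma continuous_kac_b n : continuous (@kac_b R n).
Proof. exact: continuous_monomial_sum. Qed.

Lemma continuous_kac_c n : continuous (@kac_c R n).
Proof. exact: continuous_monomial_sum. Qed.

Lemma continuous_kac_F n w : 0 < w -> {for w, continuous (@kac_F R n)}.
Proof.
move=> w0; have a0 : kac_a n w != 0 by rewrite gt_eqF ?kac_a_gt0 ?ltW.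
have sqrtC (g : R -> R) :
    {for w, continuous g} -> {for w, continuous (fun x => Num.sqrt (g x))}.
  by move=> gw; apply: continuous_comp gw _; exact: sqrt_continuous.
apply: continuousM; [apply: continuousM|].
- apply: continuousV; first by rewrite mulf_neq0 // sqrtr_eq0 -ltNge.
  by apply: continuousM; [exact: cst_continuous | exact: sqrtC].
- apply: sqrtC; apply: continuousM; first exact: continuous_kac_c.
  by apply: continuousV => //; exact: continuous_kac_a.
- apply: sqrtC; apply: continuousM.
    apply: continuousB; last by apply: continuousM; exact: continuous_kac_b.
    by apply: continuousM; [exact: continuous_kac_a | exact: continuous_kac_c].
  apply: continuousV; first by rewrite mulf_neq0 ?expf_neq0 // gt_eqF.
  by apply: continuousM => //; apply: continuousM; exact: continuous_kac_a.
Qed.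

Lemma measurable_kac_F n : measurable_fun (`]0, +oo[ : set R) (kac_F n).
Proof.
apply: open_continuous_measurable_fun; first exact: rray_open.
by move=> w; rewrite inE /= in_itv /= andbT; exact: continuous_kac_F.
Qed.

End Continuity.

Section KacIntegrals.
Context {R : realType}.
Local Notation mu := (@lebesgue_measure R).
Implicit Types (N x : R) (n : nat).

Lemma is_derive_unit_antiderivative N x : 1 + N * (1 - x) != 0 ->
  is_derive x 1 (fun w : R => 4 * N / (1 + N * (1 - w)))
    (4 * N ^+ 2 / (1 + N * (1 - x)) ^+ 2).
Proof.
move=> nz.
have lin : is_derive x 1 (fun w : R => 1 + N * (1 - w)) (- N).
  by apply: is_derive_eq; rewrite /GRing.scale /=; ring.
apply: is_derive_eq
  (is_deriveZ (4 * N) (@is_deriveV _ (fun w : R => 1 + N * (1 - w)) x _ 1 nz lin)) _.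
by rewrite /GRing.scale /=; field.
Qed.

Lemma is_derive_above1_antiderivative N x : 0 < 1 + N * (x - 1) ->
  is_derive x 1 (fun w : R => 2 * N * ln (1 + N * (w - 1)))
    (2 * N ^+ 2 / (1 + N * (x - 1))).
Proof.
move=> pos.
have lin : is_derive x 1 (fun w : R => 1 + N * (w - 1)) N.
  by apply: is_derive_eq; rewrite /GRing.scale /=; ring.
apply: is_derive_eq
  (is_deriveZ (2 * N) (@is_derive1_comp _ (@ln R) (fun w : R => 1 + N * (w - 1)) x _ _
    (is_derive1_ln pos) lin)) _.
by rewrite /GRing.scale /=; field; rewrite gt_eqF.
Qed.

Lemma continuous_unit_integrand N x : 1 + N * (1 - x) != 0 ->
  {for x, continuous (fun w : R => 4 * N ^+ 2 / (1 + N * (1 - w)) ^+ 2)}.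
Proof.
move=> nz; apply: continuousM; first exact: cst_continuous.
apply: continuousV; first exact: expf_neq0.
by apply: differentiable_continuous; apply/derivable1_diffP; exact: ex_derive.
Qed.

Lemma continuous_above1_integrand N x : 1 + N * (x - 1) != 0 ->
  {for x, continuous (fun w : R => 2 * N ^+ 2 / (1 + N * (w - 1)))}.
Proof.
move=> nz; apply: continuousM; first exact: cst_continuous.
apply: continuousV => //.
by apply: differentiable_continuous; apply/derivable1_diffP; exact: ex_derive.
Qed.

Lemma integral_kac_F_unit n : (2 <= n)%N ->
  (\int[mu]_(w in `]0%R, 1%R]) (kac_F n w)%:E <= (4 * n%:R)%:E)%E.
Proof.
move=> n2; set N := n%:R : R.
have pos x : x <= 1 -> 0 < 1 + N * (1 - x).
  by move=> x1; rewrite ltr_pwDl // mulr_ge0 ?subr_ge0.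
apply: le_trans (@le_integral_antiderivative _ (kac_F n)
  (fun w : R => 4 * N ^+ 2 / (1 + N * (1 - w)) ^+ 2)
  (fun w : R => 4 * N / (1 + N * (1 - w))) _ _ ltr01 _ _ _ _) _.
- apply: measurable_funS (measurable_kac_F n) => //.
  by apply: subset_itvl; rewrite bnd_simp.
- by move=> x /andP[x0 x1]; rewrite kac_F_ge0 kac_F_le_unit // x0 x1.
- apply: continuous_in_subspaceT => x; rewrite inE /= in_itv /= => /andP[_ x1].
  by apply: continuous_unit_integrand; rewrite gt_eqF // pos.
- by move=> x /andP[_ x1]; apply: is_derive_unit_antiderivative; rewrite gt_eqF // pos.
rewrite lee_fin subrr mulr0 addr0 divr1 lerBlDr lerDl.
by rewrite divr_ge0 ?(ltW (pos 0 ler01)) // mulr_ge0.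
Qed.

Lemma integral_kac_F_above1 n u : 1 < u ->
  (\int[mu]_(w in `]1%R, u]) (kac_F n w)%:E
    <= (2 * n%:R * ln (1 + n%:R * (u - 1)))%:E)%E.
Proof.
move=> u1; set N := n%:R : R.
have pos x : 1 <= x -> 0 < 1 + N * (x - 1).
  by move=> x1; rewrite ltr_pwDl // mulr_ge0 ?subr_ge0.
apply: le_trans (@le_integral_antiderivative _ (kac_F n)
  (fun w : R => 2 * N ^+ 2 / (1 + N * (w - 1)))
  (fun w : R => 2 * N * ln (1 + N * (w - 1))) _ _ u1 _ _ _ _) _.
- apply: measurable_funS (measurable_kac_F n) => //.
  by apply: subset_itv; rewrite bnd_simp // ltW // (lt_trans ltr01 u1).
- by move=> x /andP[x1 _]; rewrite kac_F_ge0 kac_F_le_above1 // ltW.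
- apply: continuous_in_subspaceT => x; rewrite inE /= in_itv /= => /andP[x1 _].
  by apply: continuous_above1_integrand; rewrite gt_eqF // pos.
- by move=> x /andP[x1 _]; apply: is_derive_above1_antiderivative; rewrite pos.
by rewrite subrr mulr0 addr0 ln1 mulr0 subr0.
Qed.

Lemma integral_kac_F_split n u : 1 < u ->
  (\int[mu]_(w in `[0%R, u]) (kac_F n w)%:E =
   \int[mu]_(w in `]0%R, 1%R]) (kac_F n w)%:E
     + \int[mu]_(w in `]1%R, u]) (kac_F n w)%:E)%E.
Proof.
move=> u1.
have mF : measurable_fun `]0, u] (kac_F n).
  by apply: measurable_funS (measurable_kac_F n) => //; apply: subset_itvl.
rewrite -integral_itv_obnd_cbnd; last exact/measurable_EFinP.
rewrite (@itv_bndbnd_setU _ _ _ (BRight 1)) ?bnd_simp ?ltW //.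
rewrite ge0_integral_setU //.
- by rewrite -itv_bndbnd_setU ?bnd_simp ?ltW //; exact/measurable_EFinP.
- by move=> x _; rewrite lee_fin kac_F_ge0.
- apply: lt_disjoint => x y; rewrite !in_itv /= => /andP[_ x1] /andP[y1 _].
  exact: le_lt_trans x1 y1.
Qed.

End KacIntegrals.

Theorem proposition3p1 (R : realType) :
  exists C : R, exists N : nat, 0 < C /\
    forall n : nat, (N <= n)%N ->
      (\int[@lebesgue_measure R]_(w in `[0%R, (1 + (ln (n%:R : R)) ^+ 2 / n%:R)%R])
          (kac_F n w)%:E
        <= (C * n%:R * ln (ln (n%:R : R)))%:E)%E.
Proof.
exists 16, 16%N; split => // n n16.
have N16 : 16 <= n%:R :> R by rewrite (ler_nat R 16 n).
set N := n%:R : R in N16 *; set L := ln N.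
have L2 : 2 <= L by exact: ln_ge2.
have lnL : 2^-1 <= ln L.
  by apply: le_trans ln2_ge_half _; rewrite ler_ln ?posrE; lra.
have u1 : 1 < 1 + L ^+ 2 / N by rewrite ltrDl divr_gt0 ?exprn_gt0; lra.
rewrite integral_kac_F_split //.
have n2 : (2 <= n)%N by apply: leq_trans n16.
apply: le_trans (leeD (integral_kac_F_unit n n2) (integral_kac_F_above1 n _ u1)) _.
rewrite -/N.
have -> : N * (1 + L ^+ 2 / N - 1) = L ^+ 2.
  by rewrite addrAC subrr add0r mulrCA divff ?mulr1 // gt_eqF; lra.
rewrite -EFinD lee_fin.
have := ln_1Dsqr_le L ltac:(lra).
nra.
Qed.
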